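(* Let $\Gamma$ be a set of clauses. If $\Gamma$ has a regWRTL refutation $R$, then $\Gamma$ has a pool resolution refutation $R'$ whose size is no greater than the size of $R$.
   Context: A literal is a propositional variable $x$ or its negation $\overline{x}$; a clause is a set of literals, interpreted as their disjunction. Three inference rules deriving a clause $C$ from clauses $A$ and $B$ with respect to a literal $x$ (the resolution variable), where $\overline{x}\notin A$ and $x\notin B$: - Resolution: requires $x\in A$, $\overline{x}\in B$, and $C=(A\setminus\{x\})\cup(B\setminus\{\overline{x}\})$. - Degenerate resolution: if $x\in A$ and $\overline x\in B$, $C$ is as in resolution; if $x\in A$ and $\overline x\notin B$, $C=B$; if $x\notin A$ and $\overline x\in B$, $C=A$; otherwise $C$ is one of $A$ or $B$. - w-resolution: $C=(A\setminus\{x\})\cup(B\setminus\{\overline{x}\})$ (no requirement that $x\in A$ or $\overline x\in B$). For a tree $T$, the postorder $<_T$ is defined by: if $v$ is in the subtree of the left child of $u$ and $w$ in the subtree of the right child of $u$, then $v<_T w<_T u$. A regRTL derivation of a clause $C$ from $\Gamma$ is a tree-like derivation $T$ such that (a) each leaf is labeled with either a clause of $\Gamma$ or a clause (a ''lemma'') that labels some node earlier in $T$ in the postorder $<_T$; (b) each internal node is labeled with a clause and a variable, and its clause is obtained by resolution on that variable from the clauses labeling its two children; (c) $T$ is regular: no variable is used as resolution variable more than once along any root-to-leaf path, and no variable occurring in $C$ is used as a resolution variable; (d) the root is labeled $C$. It is a refutation if $C$ is the empty clause. A regWRTL derivation is defined the same way but allowing w-resolution inferences in (b); a pool resolution derivation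 is defined the same way but allowing degenerate resolution inferences in (b). The size of a derivation is the number of clauses (nodes) in it. *)

From mathcomp Require Import all_boot.
Set Implicit Arguments. Unset Strict Implicit. Unset Printing Implicit Defensive.

Section Clauses.
Variable V : eqType.

(* A literal is a variable with a polarity: (v, true) = v, (v, false) = ~v. *)
Definition lit := (V * bool)%type.
Definition lvar (l : lit) : V := l.1.
Definition lneg (l : lit) : lit := (l.1, ~~ l.2).

(* A clause is a finite set of literals, represented by a seq; two clauses are
   the same set iff they are equal as predicates ( =i ). *)
Definition clause := seq lit.

Definition resolvent (A B : clause) (x : lit) : clause :=
  [seq y <- A | y != x] ++ [seq y <- B | y != lneg x].

Definition side_cond (A B : clause) (x : lit) : Prop :=
  lneg x \notin A /\ x \notin B.

Definition res_rule (A B C : clause) (x : lit) : Prop :=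
  side_cond A B x /\ x \in A /\ lneg x \in B /\ C =i resolvent A B x.

Definition deg_rule (A B C : clause) (x : lit) : Prop :=
  side_cond A B x /\
  (if x \in A then
     (if lneg x \in B then C =i resolvent A B x else C =i B)
   else
     (if lneg x \in B then C =i A else (C =i A \/ C =i B))).

Definition w_rule (A B C : clause) (x : lit) : Prop :=
  side_cond A B x /\ C =i resolvent A B x.

(* Tree-like derivations: a leaf is labeled with a clause; an internal node is
   labeled with a clause and the resolution literal x, its left child being the
   premise A (the one that may contain x) and its right child the premise B. *)
Inductive tree : Type :=
| Leaf of clause
| Node of clause & lit & tree & tree.

Definition label (t : tree) : clause :=
  match t with Leaf C => C | Node C _ _ _ => C end.

Fixpoint tree_size (t : tree) : nat :=
  match t with Leaf _ => 1 | Node _ _ l r => (tree_size l + tree_size r).+1 end.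

Fixpoint postorder (t : tree) : seq clause :=
  match t with
  | Leaf C => [:: C]
  | Node C _ l r => postorder l ++ postorder r ++ [:: C]
  end.

(* (a): every leaf is labeled with a clause of Gamma or with a clause labeling a
   node that is earlier in the postorder; [prev] = labels of all nodes preceding
   the current subtree in the postorder. *)
Fixpoint leaves_ok (Gamma : clause -> Prop) (prev : seq clause) (t : tree) : Prop :=
  match t with
  | Leaf C => (exists D, Gamma D /\ D =i C) \/ (exists2 D, D \in prev & D =i C)
  | Node _ _ l r =>
      leaves_ok Gamma prev l /\ leaves_ok Gamma (prev ++ postorder l) r
  end.

Fixpoint rules_ok (rule : clause -> clause -> clause -> lit -> Prop) (t : tree) : Prop :=
  match t with
  | Leaf _ => True
  | Node C x l r => rule (label l) (label r) C x /\ rules_ok rule l /\ rules_ok rule r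
  end.

(* (c): regularity; [used] = variables forbidden as resolution variables
   (those used above on the path, plus those occurring in the derived clause). *)
Fixpoint regular_from (used : seq V) (t : tree) : Prop :=
  match t with
  | Leaf _ => True
  | Node _ x l r =>
      lvar x \notin used /\
      regular_from (lvar x :: used) l /\ regular_from (lvar x :: used) r
  end.

Definition regular (t : tree) (C : clause) : Prop :=
  regular_from (map lvar C) t.

Definition derivation (rule : clause -> clause -> clause -> lit -> Prop)
  (Gamma : clause -> Prop) (t : tree) (C : clause) : Prop :=
  [/\ leaves_ok Gamma [::] t, rules_ok rule t, regular t C & label t =i C].

Definition refutation rule Gamma t := derivation rule Gamma t [::].

Definition regRTL_refutation := refutation res_rule.
Definition regWRTL_refutation := refutation w_rule.
Definition pool_refutation := refutation deg_rule.

End Clauses.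

(* Replace every w-resolution inference by a degenerate resolution inference on
   the same pivot, working bottom-up.  By induction each node of the new tree is
   labeled with a subclause of the corresponding node of the old one: degenerate
   resolution of subclauses A' of A and B' of B yields a subclause of the
   w-resolvent of A and B, since when a pivot literal is missing it copies a
   premise that does not contain the literal w-resolution would remove.  A lemma
   leaf D is replaced by the subclause of D labeling the corresponding earlier
   node, the shape and pivots are unchanged (so regularity and size are kept),
   and a subclause of the empty clause is empty. *)
From mathcomp Require Import all_boot.

Set Implicit Arguments. Unset Strict Implicit. Unset Printing Implicit Defensive.

Section PoolFromWResolution.
Variable V : eqType.
Implicit Types (A B C : clause V) (x : lit V) (P : seq (clause V)).

Definition deg_resolvent A B x : clause V :=
  if x \in A then (if lneg x \in B then resolvent A B x else B) else A.

Lemma deg_rule_deg_resolvent A B x :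
  side_cond A B x -> deg_rule A B (deg_resolvent A B x) x.
Proof.
move=> hAB; split=> //; rewrite /deg_resolvent.
by case: (x \in A); case: (lneg x \in B) => //; left.
Qed.

Lemma deg_resolvent_subset A B x :
  {subset deg_resolvent A B x <= resolvent A B x}.
Proof.
move=> y; rewrite /deg_resolvent /resolvent mem_cat !mem_filter.
case xA: (x \in A); case nxB: (lneg x \in B); rewrite ?mem_cat ?mem_filter //.
- by move=> yB; apply/orP; right; rewrite yB andbT; apply: contraFneq nxB => <-.
- by move=> yA; apply/orP; left; rewrite yA andbT; apply: contraFneq xA => <-.
- by move=> yA; apply/orP; left; rewrite yA andbT; apply: contraFneq xA => <-.
Qed.

Lemma resolvent_subset A A' B B' x :
  {subset A' <= A} -> {subset B' <= B} ->
  {subset resolvent A' B' x <= resolvent A B x}.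
Proof.
move=> sA sB y; rewrite !mem_cat !mem_filter.
by case/orP=> /andP[-> /=] => [/sA | /sB] ->; rewrite ?orbT.
Qed.

Lemma side_cond_subset A A' B B' x :
  {subset A' <= A} -> {subset B' <= B} -> side_cond A B x -> side_cond A' B' x.
Proof.
by move=> sA sB [nxA xB]; split; [apply: contra nxA; apply: sA | apply: contra xB; apply: sB].
Qed.

Lemma deg_resolvent_subset_w_rule A A' B B' C x :
  {subset A' <= A} -> {subset B' <= B} -> w_rule A B C x ->
  deg_rule A' B' (deg_resolvent A' B' x) x /\ {subset deg_resolvent A' B' x <= C}.
Proof.
move=> sA sB [hAB eqC]; split.
  by apply: deg_rule_deg_resolvent; apply: side_cond_subset hAB.
by move=> y /deg_resolvent_subset /(resolvent_subset sA sB); rewrite eqC.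
Qed.

Definition subsumes P' P : Prop :=
  forall D, D \in P -> exists2 D', D' \in P' & {subset D' <= D}.

Lemma subsumes_cat P1' P1 P2' P2 :
  subsumes P1' P1 -> subsumes P2' P2 -> subsumes (P1' ++ P2') (P1 ++ P2).
Proof.
move=> h1 h2 D; rewrite mem_cat => /orP[/h1 | /h2] [D' hD' sD];
  by exists D'; rewrite // mem_cat hD' ?orbT.
Qed.

Lemma subsumes1 C' C : {subset C' <= C} -> subsumes [:: C'] [:: C].
Proof. by move=> sC D; rewrite inE => /eqP->; exists C'; rewrite ?mem_head. Qed.

Variable Gamma : clause V -> Prop.

Lemma deg_tree_of_w_tree (t : tree V) P P' used :
  subsumes P' P -> leaves_ok Gamma P t -> rules_ok (@w_rule V) t ->
  regular_from used t ->
  exists t', [/\ leaves_ok Gamma P' t', rules_ok (@deg_rule V) t',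
    regular_from used t', {subset label t' <= label t} &
    tree_size t' = tree_size t /\ subsumes (postorder t') (postorder t)].
Proof.
elim: t P P' used => [C | C x l IHl r IHr] P P' used hP /=.
  case=> [hGamma | [D hD eqD]] _ _.
    by exists (Leaf C); split=> //=; [left | split=> //; apply: subsumes1].
  have [D' hD' sD] := hP D hD.
  have sD'C : {subset D' <= C} by move=> y /sD; rewrite eqD.
  exists (Leaf D'); split=> //=; first by right; exists D'.
  by split=> //; apply: subsumes1.
move=> [okl okr] [hC [rl rr]] [hx [regl regr]].
have [l' [okl' rl' regl' sl [szl hPl]]] := IHl _ P' _ hP okl rl regl.
have [r' [okr' rr' regr' sr [szr hPr]]] :=
  IHr _ (P' ++ postorder l') _ (subsumes_cat hP hPl) okr rr regr.
have [hdeg sC] := deg_resolvent_subset_w_rule sl sr hC.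
exists (Node (deg_resolvent (label l') (label r') x) x l' r').
split=> //=; split; first by rewrite szl szr.
by do 2![apply: subsumes_cat => //]; apply: subsumes1.
Qed.

End PoolFromWResolution.

Theorem proposition1p9 (V : eqType) (Gamma : clause V -> Prop) (R : tree V) :
  regWRTL_refutation Gamma R ->
  exists R' : tree V, pool_refutation Gamma R' /\ tree_size R' <= tree_size R.
Proof.
move=> [okR rR regR emptyR].
have subsumes_nil : @subsumes V [::] [::] by [].
have [R' [okR' rR' regR' sR [szR _]]] :=
  deg_tree_of_w_tree subsumes_nil okR rR regR.
exists R'; split; last by rewrite szR.
split=> // y; rewrite in_nil; apply/negP => /sR.
by rewrite emptyR.
Qed.
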